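(* For any (reachable) CCSK process $X$ and any $e_1,e_2\in\mathrm{ev}(X)$: $e_1\le e_2$ if and only if $\mathrm{key}(e_1)\le_X\mathrm{key}(e_2)$.
   Context: Names $\mathsf N$ with bijection $\overline\cdot$ onto disjoint co-names; $\mathsf L=\mathsf N\cup\overline{\mathsf N}\cup\{\tau\}$ ($\alpha$ over $\mathsf L$, $\lambda$ over $\mathsf L\setminus\{\tau\}$); keys $\mathsf K$ denumerable. CCSK processes $X::=\mathbf 0\mid\alpha.X\mid X\backslash\lambda\mid X+Y\mid X|Y\mid\alpha[k].X$; $\mathrm{keys}(X)$ keys in $X$; standard means no keys. Directions $D\in\{\mathrm L,\mathrm R\}$, $\bar{\mathrm L}=\mathrm R$, $\bar{\mathrm R}=\mathrm L$. Proof keyed labels $\theta::=\upsilon\alpha[k]\mid\upsilon\langle\upsilon_1\lambda[k],\upsilon_2\overline\lambda[k]\rangle$ ($\upsilon,\upsilon_i\in\{|_{\mathrm L},|_{\mathrm R},+_{\mathrm L},+_{\mathrm R}\}^*$), $\ell(\upsilon\alpha[k])=\alpha$, $\ell(\upsilon\langle\cdots\rangle)=\tau$, $\mathrm{key}(\theta)=k$. Forward CCSK$^{\mathrm P}$ transitions: least relation closed under (act) $\alpha.X\xrightarrow{\alpha[k]}\alpha[k].X$ if $\mathrm{keys}(X)=\emptyset$; (pre) $X\xrightarrow\theta X',\mathrm{key}(\theta)\ne k\Rightarrow\alpha[k].X\xrightarrow\theta\alpha[k].X'$; (res) $X\xrightarrow\theta X',\ell(\theta)\notin\{\lambda,\overline\lambda\}\Rightarrow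 X\backslash\lambda\xrightarrow\theta X'\backslash\lambda$; (par) $X\xrightarrow\theta X',\mathrm{key}(\theta)\notin\mathrm{keys}(Y)\Rightarrow X|Y\xrightarrow{|_{\mathrm L}\theta}X'|Y$, $Y|X\xrightarrow{|_{\mathrm R}\theta}Y|X'$; (syn) $X\xrightarrow{\upsilon_1\lambda[k]}X',Y\xrightarrow{\upsilon_2\overline\lambda[k]}Y'\Rightarrow X|Y\xrightarrow{\langle\upsilon_1\lambda[k],\upsilon_2\overline\lambda[k]\rangle}X'|Y'$; (sum) $X\xrightarrow\theta X',\mathrm{keys}(Y)=\emptyset\Rightarrow X+Y\xrightarrow{+_{\mathrm L}\theta}X'+Y$, $Y+X\xrightarrow{+_{\mathrm R}\theta}Y+X'$. Backward transitions are converses; $\bar t$ is the inverse of $t$. A path is a sequence of composable transitions; it is rooted if its source cannot perform a backward transition. $X$ is reachable if there is a path from a standard process to $X$. Transitions are connected if there is a path from the source of one to the target of the other. Independence $\iota$ on proof labels: least relation closed under (C1) $+_D\theta\mathrel\iota+_D\theta'$ if $\theta\mathrel\iota\theta'$; (P1) $|_D\theta\mathrel\iota|_D\theta'$ if $\theta\mathrel\iota\theta'$; (P2$_k$) $|_D\theta\mathrel\iota|_{\bar D}\theta'$ if keys differ; (S1) $|_D\theta\mathrel\iota\langle\theta_{\mathrm L},\theta_{\mathrm R}\rangle$ if $\theta\mathrel\iota\theta_D$; (S2) $\langle\theta_{\mathrm L},\theta_{\mathrm R}\rangle\mathrel\iota|_D\theta$ if $\theta_D\mathrel\iota\theta$;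 (S3) $\langle\theta_1,\theta_2\rangle\mathrel\iota\langle\theta_1',\theta_2'\rangle$ if $\theta_1\mathrel\iota\theta_1'$, $\theta_2\mathrel\iota\theta_2'$. On CCSK$^{\mathrm P}$ transitions $t\mathrel\iota u$ iff connected and labels $\iota$. Events: $\sim$ is the smallest equivalence on CCSK$^{\mathrm P}$ transitions with $t\sim t'$ whenever $t:P\to Q$, $u:P\to R$, $u':Q\to S$, $t':R\to S$ ($u'$ with label and direction of $u$, $t'$ of $t$) and $t\mathrel\iota u$; events are classes $[t]$, forward events are classes of forward transitions, $\bar e=[\bar t]$; all transitions of an event have the same key, denoted $\mathrm{key}(e)$. $\sharp(\varepsilon,e)=0$, $\sharp(tr,e)=\sharp(r,e)+1$ if $t\in e$, $\sharp(r,e)-1$ if $t\in\bar e$, else $\sharp(r,e)$. For forward events, $e\le e'$ iff every rooted path $r$ with $\sharp(r,e')>0$ has $\sharp(r,e)>0$. $\mathrm{ev}(X)$ is the set of forward events $e$ such that some rooted path $r$ with target $X$ has $\sharp(r,e)>0$. The partial order $\le_X$ on $\mathrm{keys}(X)$ is the reflexive transitive closure of $\mathrm{ord}(X)$, where $\mathrm{ord}(\mathbf 0)=\emptyset$, $\mathrm{ord}(\alpha.X)=\mathrm{ord}(X\backslash\lambda)=\mathrm{ord}(X)$, $\mathrm{ord}(X+Y)=\mathrm{ord}(X|Y)=\mathrm{ord}(X)\cup\mathrm{ord}(Y)$, and $\mathrm{ord}(\alpha[n].X)=\mathrm{ord}(X)\cup\{(n,k)\mid k\in\mathrm{keys}(X)\}$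 (pairs $(n,k)$ meaning $n<k$). *)

From Stdlib Require Import List ZArith Relations.
Import ListNotations.
Set Implicit Arguments.

Inductive vis : Type := Nm (a : nat) | Co (a : nat).
Definition vbar (l : vis) : vis := match l with Nm a => Co a | Co a => Nm a end.

Inductive label : Type := Vis (l : vis) | Tau.

Definition key := nat.

Inductive proc : Type :=
| Nil : proc
| Pre : label -> proc -> proc
| Res : proc -> vis -> proc
| Sum : proc -> proc -> proc
| Par : proc -> proc -> proc
| Keyed : label -> key -> proc -> proc.

Fixpoint keys (X : proc) : list key :=
  match X with
  | Nil => []
  | Pre _ X => keys X
  | Res X _ => keys X
  | Sum X Y => keys X ++ keys Y
  | Par X Y => keys X ++ keys Y
  | Keyed _ k X => k :: keys X
  end.

Definition standard (X : proc) : Prop := keys X = [].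

Inductive dir : Type := DL | DR.
Definition dbar (D : dir) : dir := match D with DL => DR | DR => DL end.

(** Proof keyed labels.  [PPar D θ] is |_D θ, [PSum D θ] is +_D θ,
    [PAct α k] is α[k] (with empty prefix), [PSyn θ1 θ2] is ⟨θ1,θ2⟩. *)
Inductive plabel : Type :=
| PAct : label -> key -> plabel
| PPar : dir -> plabel -> plabel
| PSum : dir -> plabel -> plabel
| PSyn : plabel -> plabel -> plabel.

Fixpoint lab (t : plabel) : label :=
  match t with
  | PAct a _ => a
  | PPar _ t => lab t
  | PSum _ t => lab t
  | PSyn _ _ => Tau
  end.

Fixpoint pkey (t : plabel) : key :=
  match t with
  | PAct _ k => k
  | PPar _ t => pkey t
  | PSum _ t => pkey t
  | PSyn t _ => pkey t
  end.

Inductive step : proc -> plabel -> proc -> Prop :=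
| s_act : forall a k X, keys X = [] -> step (Pre a X) (PAct a k) (Keyed a k X)
| s_pre : forall a k X th X', step X th X' -> pkey th <> k ->
    step (Keyed a k X) th (Keyed a k X')
| s_res : forall l X th X', step X th X' ->
    lab th <> Vis l -> lab th <> Vis (vbar l) ->
    step (Res X l) th (Res X' l)
| s_parL : forall X Y th X', step X th X' -> ~ In (pkey th) (keys Y) ->
    step (Par X Y) (PPar DL th) (Par X' Y)
| s_parR : forall X Y th X', step X th X' -> ~ In (pkey th) (keys Y) ->
    step (Par Y X) (PPar DR th) (Par Y X')
| s_syn : forall l X Y th1 th2 X' Y', step X th1 X' -> step Y th2 Y' ->
    lab th1 = Vis l -> lab th2 = Vis (vbar l) -> pkey th1 = pkey th2 ->
    step (Par X Y) (PSyn th1 th2) (Par X' Y')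
| s_sumL : forall X Y th X', step X th X' -> keys Y = [] ->
    step (Sum X Y) (PSum DL th) (Sum X' Y)
| s_sumR : forall X Y th X', step X th X' -> keys Y = [] ->
    step (Sum Y X) (PSum DR th) (Sum Y X').

Record trans : Type := Tr { tsrc : proc; tlab : plabel; tfwd : bool; ttgt : proc }.

Definition is_trans (t : trans) : Prop :=
  if tfwd t then step (tsrc t) (tlab t) (ttgt t) else step (ttgt t) (tlab t) (tsrc t).

Definition tinv (t : trans) : trans := Tr (ttgt t) (tlab t) (negb (tfwd t)) (tsrc t).

Inductive path : proc -> list trans -> proc -> Prop :=
| path_nil : forall P, path P [] P
| path_cons : forall t r Q, is_trans t -> path (ttgt t) r Q -> path (tsrc t) (t :: r) Q.

Definition rooted_proc (P : proc) : Prop := ~ exists th P', step P' th P.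

Definition rooted_path (r : list trans) : Prop :=
  exists P Q, path P r Q /\ rooted_proc P.

Definition reachable (X : proc) : Prop :=
  exists P r, standard P /\ path P r X.

Definition connected (t u : trans) : Prop :=
  (exists r, path (tsrc t) r (ttgt u)) \/ (exists r, path (tsrc u) r (ttgt t)).

Definition pick (D : dir) (a b : plabel) : plabel := match D with DL => a | DR => b end.

Inductive indep : plabel -> plabel -> Prop :=
| iC1 : forall D t t', indep t t' -> indep (PSum D t) (PSum D t')
| iP1 : forall D t t', indep t t' -> indep (PPar D t) (PPar D t')
| iP2 : forall D t t', pkey t <> pkey t' -> indep (PPar D t) (PPar (dbar D) t')
| iS1 : forall D t tL tR, indep t (pick D tL tR) -> indep (PPar D t) (PSyn tL tR)
| iS2 : forall D t tL tR, indep (pick D tL tR) t -> indep (PSyn tL tR) (PPar D t)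
| iS3 : forall t1 t2 t1' t2', indep t1 t1' -> indep t2 t2' ->
    indep (PSyn t1 t2) (PSyn t1' t2').

Definition tindep (t u : trans) : Prop := connected t u /\ indep (tlab t) (tlab u).

Definition square (t t' : trans) : Prop :=
  exists u u', is_trans t /\ is_trans u /\ is_trans u' /\ is_trans t' /\
    tsrc u = tsrc t /\ tsrc u' = ttgt t /\ tsrc t' = ttgt u /\ ttgt t' = ttgt u' /\
    tlab u' = tlab u /\ tfwd u' = tfwd u /\ tlab t' = tlab t /\ tfwd t' = tfwd t /\
    tindep t u.

Definition ev_eq : trans -> trans -> Prop := clos_refl_sym_trans trans square.

(** Events are represented by a representative transition [e]: the event is [e],
    and its inverse event is [tinv e].  [in_ev s e] means s ∈ [e]. *)
Definition in_ev (s e : trans) : Prop := ev_eq s e.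

Definition ev_key (e : trans) : key := pkey (tlab e).

Inductive sharp : list trans -> trans -> Z -> Prop :=
| sh_nil : forall e, sharp [] e 0
| sh_in : forall s r e z, in_ev s e -> sharp r e z -> sharp (s :: r) e (z + 1)
| sh_inbar : forall s r e z, ~ in_ev s e -> in_ev s (tinv e) -> sharp r e z ->
    sharp (s :: r) e (z - 1)
| sh_out : forall s r e z, ~ in_ev s e -> ~ in_ev s (tinv e) -> sharp r e z ->
    sharp (s :: r) e z.

Definition sharp_pos (r : list trans) (e : trans) : Prop :=
  exists z, sharp r e z /\ (0 < z)%Z.

Definition fwd_event_rep (e : trans) : Prop := is_trans e /\ tfwd e = true.

Definition ev_le (e e' : trans) : Prop :=
  forall r, rooted_path r -> sharp_pos r e' -> sharp_pos r e.

Definition in_evX (X : proc) (e : trans) : Prop :=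
  exists P r, rooted_proc P /\ path P r X /\ sharp_pos r e.

Fixpoint ord (X : proc) (n k : key) : Prop :=
  match X with
  | Nil => False
  | Pre _ X => ord X n k
  | Res X _ => ord X n k
  | Sum X Y => ord X n k \/ ord Y n k
  | Par X Y => ord X n k \/ ord Y n k
  | Keyed _ m X => ord X n k \/ (n = m /\ In k (keys X))
  end.

Definition le_X (X : proc) (n k : key) : Prop :=
  In n (keys X) /\ In k (keys X) /\ clos_refl_trans key (ord X) n k.

(* Forward reachable processes record their history in their keys: a key that is maximal for
   ord can always be undone, and swapping a step past an earlier step on an independent key
   yields a square.  For a forward transition t with key k, let past(t) be its target with every
   key not below k undone; squares preserve it, so it is an invariant of the event [t].  Say e has
   occurred in Q when restricting Q to the keys of past(e) gives past(e).  A transition makes e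
   occur iff it belongs to e, and unmakes it iff it belongs to the inverse event, so on a rooted
   path r ending in Q we get ♯(r,e) > 0 iff e has occurred in Q; for e in ev(X) the keys of
   past(e) are then exactly those below key(e) in X.
   If key(e1) <=_X key(e2), every process where e2 has occurred contains past(e1), whence
   e1 <= e2.  Conversely, rolling X back to past(e2) is a rooted path on which e2 has occurred,
   hence so has e1, so key(e1) survives the restriction to the keys below key(e2). *)

From Stdlib Require Import List ZArith Relations Lia Classical ClassicalEpsilon Wf_nat.
Import ListNotations.
Set Implicit Arguments.

Local Notation decide := excluded_middle_informative.

Fixpoint restrict (D : key -> Prop) (X : proc) : proc :=
  match X with
  | Nil => Nil
  | Pre a Y => Pre a (restrict D Y)
  | Res Y l => Res (restrict D Y) l
  | Sum Y Z => Sum (restrict D Y) (restrict D Z)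
  | Par Y Z => Par (restrict D Y) (restrict D Z)
  | Keyed a k Y =>
      if decide (D k) then Keyed a k (restrict D Y) else Pre a (restrict D Y)
  end.

Notation undo X j := (restrict (fun x => x <> j) X).

Definition down_closed (X : proc) (D : key -> Prop) : Prop :=
  forall x y, ord X x y -> D y -> D x.

Lemma keys_restrict D X x : In x (keys (restrict D X)) <-> In x (keys X) /\ D x.
Proof.
  induction X; simpl; rewrite ?in_app_iff; try tauto.
  destruct (decide (D k)); simpl; rewrite ?IHX; firstorder congruence.
Qed.

Lemma ord_keys X x y : ord X x y -> In x (keys X) /\ In y (keys X).
Proof. induction X; simpl; rewrite ?in_app_iff; firstorder (subst; auto). Qed.

Lemma ord_restrict D X x y : ord (restrict D X) x y <-> ord X x y /\ D x /\ D y.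
Proof.
  induction X; simpl; try tauto.
  destruct (decide (D k)); simpl; rewrite ?IHX, ?keys_restrict; firstorder congruence.
Qed.

Lemma restrict_id D X : (forall x, In x (keys X) -> D x) -> restrict D X = X.
Proof.
  induction X; simpl; intros H; f_equal; auto;
    try (apply IHX || apply IHX1 || apply IHX2); intros;
    try (apply H; rewrite ?in_app_iff; tauto).
  destruct (decide (D k)); [f_equal; auto | exfalso; auto].
Qed.

Lemma restrict_ext D D' X : (forall x, D x <-> D' x) -> restrict D X = restrict D' X.
Proof.
  intros H; induction X; simpl; f_equal; auto.
  destruct (decide (D k)), (decide (D' k)); try f_equal; firstorder.
Qed.

Lemma restrict_restrict D D' X :
  restrict D (restrict D' X) = restrict (fun x => D x /\ D' x) X.
Proof.
  induction X; simpl; f_equal; auto.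
  destruct (decide (D' k)), (decide (D k /\ D' k)); simpl;
    try destruct (decide (D k)); try f_equal; tauto.
Qed.

Lemma restrict_comm D D' X : restrict D (restrict D' X) = restrict D' (restrict D X).
Proof. rewrite !restrict_restrict. apply restrict_ext. tauto. Qed.

Lemma restrict_undo D X j : ~ D j -> restrict D (undo X j) = restrict D X.
Proof.
  intros H. rewrite restrict_restrict. apply restrict_ext.
  intros x; split; [tauto|]. intros Hx; split; congruence.
Qed.

Lemma undo_notin X j : ~ In j (keys X) -> undo X j = X.
Proof. intros H; apply restrict_id. congruence. Qed.

Lemma undo_keyed a k Y j : k <> j -> undo (Keyed a k Y) j = Keyed a k (undo Y j).
Proof. intros H; simpl; destruct (decide (k <> j)); tauto. Qed.

Lemma length_keys_restrict D X : length (keys (restrict D X)) <= length (keys X).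
Proof.
  induction X; simpl; rewrite ?length_app; try lia.
  destruct (decide (D k)); simpl; lia.
Qed.

Lemma length_keys_restrict_lt D X j : In j (keys X) -> ~ D j ->
  length (keys (restrict D X)) < length (keys X).
Proof.
  induction X; simpl; rewrite ?length_app, ?in_app_iff; intros Hj nD; auto; try tauto.
  - pose proof (length_keys_restrict D X1); pose proof (length_keys_restrict D X2).
    destruct Hj as [Hj|Hj]; [specialize (IHX1 Hj nD) | specialize (IHX2 Hj nD)]; lia.
  - pose proof (length_keys_restrict D X1); pose proof (length_keys_restrict D X2).
    destruct Hj as [Hj|Hj]; [specialize (IHX1 Hj nD) | specialize (IHX2 Hj nD)]; lia.
  - pose proof (length_keys_restrict D X).
    destruct Hj as [<-|Hj]; destruct (decide (D _)); simpl; try tauto;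
      try specialize (IHX Hj nD); lia.
Qed.

Fixpoint std_guarded (X : proc) : Prop :=
  match X with
  | Nil => True
  | Pre _ Y => keys Y = []
  | Res Y _ => std_guarded Y
  | Sum Y Z | Par Y Z => std_guarded Y /\ std_guarded Z
  | Keyed _ _ Y => std_guarded Y
  end.

Lemma standard_std_guarded X : standard X -> std_guarded X.
Proof.
  unfold standard; induction X; simpl; auto; try discriminate;
    intros H; apply app_eq_nil in H; tauto.
Qed.

Lemma std_guarded_restrict D X :
  std_guarded X -> down_closed X D -> std_guarded (restrict D X).
Proof.
  unfold down_closed; induction X; simpl; intros G H; auto.
  - apply length_zero_iff_nil. pose proof (length_keys_restrict D X).
    rewrite G in *; simpl in *; lia.
  - split; [apply IHX1|apply IHX2]; firstorder.
  - split; [apply IHX1|apply IHX2]; firstorder.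
  - destruct (decide (D k)); simpl; [apply IHX; firstorder|].
    destruct (keys (restrict D X)) as [|x xs] eqn:E; auto.
    assert (Hx : In x (keys (restrict D X))) by (rewrite E; simpl; auto).
    apply keys_restrict in Hx. exfalso; firstorder.
Qed.

Lemma std_guarded_restrict_down_closed D X :
  std_guarded (restrict D X) -> down_closed X D.
Proof.
  unfold down_closed; induction X; simpl; intros G x y Ho Dy;
    try (destruct G, Ho; eauto; fail); eauto.
  - apply standard_std_guarded in G. eauto.
  - destruct (decide (D k)); simpl in G; destruct Ho as [Ho|[-> Hy]]; eauto.
    + apply standard_std_guarded in G. eauto.
    + exfalso. assert (Hy' : In y (keys (restrict D X))) by (apply keys_restrict; auto).
      rewrite G in Hy'; auto.
Qed.

Lemma step_key_fresh A th B : step A th B -> ~ In (pkey th) (keys A).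
Proof.
  induction 1; simpl; rewrite ?in_app_iff; try tauto.
  - rewrite H; simpl; auto.
  - intros [E|E]; auto.
  - intros [E|E]; [apply IHstep1; auto | apply IHstep2; congruence].
  - rewrite H0; simpl; tauto.
  - rewrite H0; simpl; tauto.
Qed.

Lemma step_key_new A th B : step A th B -> In (pkey th) (keys B).
Proof. induction 1; simpl; rewrite ?in_app_iff; auto. Qed.

Lemma step_key_neq B thu C k : step B thu C -> In k (keys B) -> pkey thu <> k.
Proof. intros S H E. apply (step_key_fresh S). rewrite E. exact H. Qed.

Lemma step_keys_incl A th B : step A th B -> forall x, In x (keys A) -> In x (keys B).
Proof.
  induction 1; simpl; intros x; rewrite ?in_app_iff; try rewrite H; simpl; firstorder.
Qed.

Lemma step_keys_inv A th B : step A th B ->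
  forall x, In x (keys B) -> x = pkey th \/ In x (keys A).
Proof.
  induction 1; simpl; intros x; rewrite ?in_app_iff; try rewrite H; simpl; try firstorder.
  destruct (IHstep2 x H4); auto; left; congruence.
Qed.

Lemma step_length_keys A th B : step A th B -> length (keys A) < length (keys B).
Proof. induction 1; simpl; rewrite ?length_app; try rewrite H; simpl; lia. Qed.

Lemma step_ord_incl A th B : step A th B -> forall x y, ord A x y -> ord B x y.
Proof.
  induction 1; simpl; intros x y; try rewrite H; simpl; try firstorder.
  right; split; auto. eapply step_keys_incl; eauto.
Qed.

Lemma step_ord_inv A th B : step A th B -> forall x y, ord B x y ->
  ord A x y \/ (y = pkey th /\ In x (keys A)).
Proof.
  induction 1; simpl; intros x y; rewrite ?in_app_iff.
  - rewrite H; simpl; tauto.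
  - intros [Ho|[-> Hy]].
    + destruct (IHstep _ _ Ho); tauto.
    + destruct (step_keys_inv H _ Hy); auto.
  - auto.
  - intros [Ho|Ho]; [destruct (IHstep _ _ Ho)|]; tauto.
  - intros [Ho|Ho]; [|destruct (IHstep _ _ Ho)]; tauto.
  - intros [Ho|Ho]; [destruct (IHstep1 _ _ Ho)|destruct (IHstep2 _ _ Ho)]; try tauto.
    match goal with H : _ /\ _ |- _ => destruct H end. right; split; [congruence|tauto].
  - intros [Ho|Ho]; [destruct (IHstep _ _ Ho)|]; tauto.
  - intros [Ho|Ho]; [|destruct (IHstep _ _ Ho)]; tauto.
Qed.

Lemma step_key_maximal A th B : step A th B -> forall y, ~ ord B (pkey th) y.
Proof.
  intros H y Ho. apply (step_key_fresh H).
  destruct (step_ord_inv H _ _ Ho) as [Ho'|[_ Hi]]; [apply (ord_keys _ _ _ Ho') | exact Hi].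
Qed.

Lemma undo_step A th B : step A th B -> undo B (pkey th) = A.
Proof.
  induction 1; simpl; try rewrite IHstep; try rewrite IHstep1.
  - destruct (decide (k <> k)); [tauto|]. rewrite restrict_id; auto. rewrite H; simpl; tauto.
  - destruct (decide (k <> pkey th)); [reflexivity | exfalso; auto].
  - reflexivity.
  - rewrite undo_notin; auto.
  - rewrite undo_notin; auto.
  - rewrite H3, IHstep2; reflexivity.
  - rewrite restrict_id; auto. rewrite H0; simpl; tauto.
  - rewrite restrict_id; auto. rewrite H0; simpl; tauto.
Qed.

Lemma step_std_guarded A th B : step A th B -> std_guarded A -> std_guarded B.
Proof. induction 1; simpl; try tauto. intros _. now apply standard_std_guarded. Qed.

Lemma step_label_unique A th th' B : step A th B -> step A th' B -> th = th'.
Proof.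
  assert (Hirr : forall A th, ~ step A th A)
    by (intros A0 th0 H; apply step_length_keys in H; lia).
  intros H; revert th'; induction H; intros th' H'; inversion H'; subst;
    f_equal; auto; exfalso; eapply Hirr; eauto.
Qed.

Definition swappable (Y : proc) (th : plabel) (Z : proc) : Prop :=
  forall X thj, step X thj Y -> ~ ord Z (pkey thj) (pkey th) ->
    step X th (undo Z (pkey thj)) /\ step (undo Z (pkey thj)) thj Z /\ indep th thj.

Lemma swappable_keyed a k Y th Z : step Y th Z -> pkey th <> k ->
  swappable Y th Z -> swappable (Keyed a k Y) th (Keyed a k Z).
Proof.
  intros S Hk IH X thj HX Hord.
  inversion HX as [? ? ? Hnil | ? ? X0 ? ? S0 Hk0 | | | | | |]; subst; simpl in Hord.
  - exfalso. apply Hord. right. split; auto. exact (step_key_new S).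
  - destruct (IH _ _ S0) as (S1 & S2 & I); [tauto|].
    rewrite undo_keyed by auto. repeat split; try constructor; auto.
Qed.

Lemma swappable_res l Y th Z : lab th <> Vis l -> lab th <> Vis (vbar l) ->
  swappable Y th Z -> swappable (Res Y l) th (Res Z l).
Proof.
  intros Hl Hl' IH X thj HX Hord.
  inversion HX as [| | ? X0 ? ? S0 Hj Hj' | | | | |]; subst; cbn [restrict pkey ord] in *.
  destruct (IH _ _ S0) as (S1 & S2 & I); [tauto|].
  repeat split; try constructor; auto.
Qed.

Lemma swappable_sumL Y th Z W : keys W = [] ->
  swappable Y th Z -> swappable (Sum Y W) (PSum DL th) (Sum Z W).
Proof.
  intros HW IH X thj HX Hord.
  inversion HX as [| | | | | | X0 ? ? ? S0 _ | W0 ? ? ? S0 _]; subst; cbn [restrict pkey ord] in *.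
  - destruct (IH _ _ S0) as (S1 & S2 & I); [tauto|].
    rewrite (undo_notin W) by (rewrite HW; auto).
    repeat split; constructor; auto.
  - exfalso. pose proof (step_key_new S0) as Hk. rewrite HW in Hk. contradiction.
Qed.

Lemma swappable_sumR Y th Z W : keys W = [] ->
  swappable Y th Z -> swappable (Sum W Y) (PSum DR th) (Sum W Z).
Proof.
  intros HW IH X thj HX Hord.
  inversion HX as [| | | | | | W0 ? ? ? S0 _ | X0 ? ? ? S0 _]; subst; cbn [restrict pkey ord] in *.
  - exfalso. pose proof (step_key_new S0) as Hk. rewrite HW in Hk. contradiction.
  - destruct (IH _ _ S0) as (S1 & S2 & I); [tauto|].
    rewrite (undo_notin W) by (rewrite HW; auto).
    repeat split; constructor; auto.
Qed.

Lemma swappable_parL Y th Z W : step Y th Z -> ~ In (pkey th) (keys W) ->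
  swappable Y th Z -> swappable (Par Y W) (PPar DL th) (Par Z W).
Proof.
  intros S N IH X thj HX Hord.
  inversion HX as [| | | X0 ? tj ? S0 N0 | W0 ? tj ? S0 N0 | ? X0 W0 t1 t2 ? ? S1 S2 L1 L2 Ek | |];
    subst; cbn [restrict pkey ord] in *.
  - destruct (IH _ _ S0) as (S1 & S2 & I); [tauto|].
    rewrite (undo_notin W) by auto.
    repeat split; constructor; auto.
  - assert (Hk : pkey th <> pkey tj).
    { intros E. apply N. rewrite E. exact (step_key_new S0). }
    rewrite (undo_step S0), (undo_notin Z).
    2: { intros Hi. destruct (step_keys_inv S _ Hi); auto. }
    repeat split.
    + constructor; auto. intros Hi; apply N. exact (step_keys_incl S0 _ Hi).
    + constructor; auto. intros Hi. destruct (step_keys_inv S _ Hi); auto.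
    + apply (iP2 DL). exact Hk.
  - destruct (IH _ _ S1) as (T1 & T2 & I); [tauto|].
    rewrite Ek, (undo_step S2), <- Ek.
    repeat split.
    + constructor; auto. intros Hi; apply N. exact (step_keys_incl S2 _ Hi).
    + econstructor; eauto.
    + apply (iS1 DL). exact I.
Qed.

Lemma swappable_parR Y th Z W : step Y th Z -> ~ In (pkey th) (keys W) ->
  swappable Y th Z -> swappable (Par W Y) (PPar DR th) (Par W Z).
Proof.
  intros S N IH X thj HX Hord.
  inversion HX as [| | | W0 ? tj ? S0 N0 | X0 ? tj ? S0 N0 | ? W0 X0 t1 t2 ? ? S1 S2 L1 L2 Ek | |];
    subst; cbn [restrict pkey ord] in *.
  - assert (Hk : pkey th <> pkey tj).
    { intros E. apply N. rewrite E. exact (step_key_new S0). }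
    rewrite (undo_step S0), (undo_notin Z).
    2: { intros Hi. destruct (step_keys_inv S _ Hi); auto. }
    repeat split.
    + constructor; auto. intros Hi; apply N. exact (step_keys_incl S0 _ Hi).
    + constructor; auto. intros Hi. destruct (step_keys_inv S _ Hi); auto.
    + apply (iP2 DR). exact Hk.
  - destruct (IH _ _ S0) as (S1 & S2 & I); [tauto|].
    rewrite (undo_notin W) by auto.
    repeat split; constructor; auto.
  - rewrite (undo_step S1). rewrite Ek in Hord |- *.
    destruct (IH _ _ S2) as (T1 & T2 & I); [tauto|].
    repeat split.
    + constructor; auto. intros Hi; apply N. exact (step_keys_incl S1 _ Hi).
    + econstructor; eauto.
    + apply (iS1 DR). exact I.
Qed.

Lemma swappable_syn l Y1 Y2 th1 th2 Z1 Z2 : step Y1 th1 Z1 -> step Y2 th2 Z2 ->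
  lab th1 = Vis l -> lab th2 = Vis (vbar l) -> pkey th1 = pkey th2 ->
  swappable Y1 th1 Z1 -> swappable Y2 th2 Z2 ->
  swappable (Par Y1 Y2) (PSyn th1 th2) (Par Z1 Z2).
Proof.
  intros S1 S2 L1 L2 Ek IH1 IH2 X thj HX Hord.
  inversion HX as [| | | X0 ? tj ? S0 N0 | X0 ? tj ? S0 N0 | ? X1 X2 t1 t2 ? ? T1 T2 M1 M2 Et | |];
    subst; cbn [restrict pkey ord] in *.
  - destruct (IH1 _ _ S0) as (U1 & U2 & I); [tauto|].
    assert (Hk : pkey tj <> pkey th2).
    { intros E. apply (step_key_fresh S1). rewrite Ek, <- E. exact (step_key_new S0). }
    assert (N : ~ In (pkey tj) (keys Z2)).
    { intros Hi. destruct (step_keys_inv S2 _ Hi); auto. }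
    rewrite (undo_notin Z2) by exact N.
    repeat split; econstructor; eauto.
  - rewrite Ek in Hord. destruct (IH2 _ _ S0) as (U1 & U2 & I); [tauto|].
    assert (Hk : pkey tj <> pkey th1).
    { intros E. apply (step_key_fresh S2). rewrite <- Ek, <- E. exact (step_key_new S0). }
    assert (N : ~ In (pkey tj) (keys Z1)).
    { intros Hi. destruct (step_keys_inv S1 _ Hi); auto. }
    rewrite (undo_notin Z1) by exact N.
    repeat split; econstructor; eauto.
  - destruct (IH1 _ _ T1) as (U1 & U2 & I1); [tauto|].
    rewrite Ek, Et in Hord. destruct (IH2 _ _ T2) as (V1 & V2 & I2); [tauto|].
    rewrite <- Et in V1, V2.
    repeat split; econstructor; eauto.
Qed.

Lemma step_swappable Y th Z : step Y th Z -> swappable Y th Z.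
Proof.
  induction 1; eauto using swappable_keyed, swappable_res, swappable_parL, swappable_parR,
    swappable_syn, swappable_sumL, swappable_sumR.
  intros W thj HW. inversion HW.
Qed.

Inductive forward_reachable : proc -> Prop :=
| fr_standard : forall P, standard P -> forward_reachable P
| fr_step : forall A th B, forward_reachable A -> step A th B -> forward_reachable B.

Lemma forward_reachable_std_guarded X : forward_reachable X -> std_guarded X.
Proof.
  induction 1; [now apply standard_std_guarded | eapply step_std_guarded; eauto].
Qed.

Lemma undo_maximal_key B j : forward_reachable B -> In j (keys B) -> (forall y, ~ ord B j y) ->
  exists thj, pkey thj = j /\ step (undo B j) thj B /\ forward_reachable (undo B j).
Proof.
  intros FB; revert j; induction FB as [P HP | A th B FA IH S]; intros j Hj Hm.
  - unfold standard in HP. rewrite HP in Hj. destruct Hj.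
  - destruct (PeanoNat.Nat.eq_dec j (pkey th)) as [->|Hne].
    + exists th. rewrite (undo_step S). auto.
    + destruct (step_keys_inv S _ Hj) as [E|HjA]; [congruence|].
      destruct (IH j HjA) as (thj & <- & S1 & F1).
      { intros y Hy. apply (Hm y). exact (step_ord_incl S _ _ Hy). }
      destruct (step_swappable S S1 (Hm _)) as (T1 & T2 & _).
      exists thj. repeat split; auto. exact (fr_step F1 T1).
Qed.

Lemma forward_reachable_back A th B :
  step A th B -> forward_reachable B -> forward_reachable A.
Proof.
  intros S FB.
  destruct (undo_maximal_key _ FB (step_key_new S) (step_key_maximal S))
    as (_ & _ & _ & FA).
  rewrite (undo_step S) in FA. exact FA.
Qed.

Lemma maximal_key_outside D X : forward_reachable X -> down_closed X D ->
  (forall x, In x (keys X) -> D x) \/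
  exists j, In j (keys X) /\ ~ D j /\ forall y, ~ ord X j y.
Proof.
  intros FX; induction FX as [P HP | A th B FA IH S]; intros Hd.
  - left. unfold standard in HP. rewrite HP. intros x [].
  - assert (HdA : down_closed A D).
    { intros x y Ho. apply Hd. exact (step_ord_incl S _ _ Ho). }
    destruct (decide (D (pkey th))) as [Dk|nDk].
    2: { right. exists (pkey th). repeat split; auto.
         - exact (step_key_new S).
         - exact (step_key_maximal S). }
    destruct (IH HdA) as [Hall | (j & Hj & nD & Hm)].
    + left. intros x Hx. destruct (step_keys_inv S _ Hx) as [->|HxA]; auto.
    + right. exists j. repeat split; auto.
      * exact (step_keys_incl S _ Hj).
      * intros y Ho. destruct (step_ord_inv S _ _ Ho) as [Ho'|[-> _]]; [exact (Hm y Ho')|].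
        exact (nD (Hd _ _ Ho Dk)).
Qed.

Lemma is_trans_forward_reachable t :
  is_trans t -> (forward_reachable (tsrc t) <-> forward_reachable (ttgt t)).
Proof.
  unfold is_trans. destruct (tfwd t); intros S; split; intros F;
    eauto using fr_step, forward_reachable_back.
Qed.

Lemma path_forward_reachable A r B : path A r B ->
  (forward_reachable A <-> forward_reachable B) /\
  (forall s, In s r -> (forward_reachable A <-> forward_reachable (tsrc s))).
Proof.
  induction 1 as [|t r B It P [IH1 IH2]].
  - split; [tauto | intros s []].
  - pose proof (is_trans_forward_reachable _ It).
    split; [tauto|]. intros s [<-|Hs]; [tauto|]. specialize (IH2 s Hs). tauto.
Qed.

Lemma forward_reachable_rooted P : forward_reachable P -> rooted_proc P -> standard P.
Proof. intros [|A th B] R; auto. exfalso. apply R. eauto. Qed.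

Lemma standard_rooted P : standard P -> rooted_proc P.
Proof. intros H [th [P' S]]. pose proof (step_key_new S). rewrite H in *. auto. Qed.

Lemma reachable_forward_reachable X : reachable X -> forward_reachable X.
Proof.
  intros (P & r & HP & Hr). apply (proj1 (path_forward_reachable Hr)). now constructor.
Qed.

Lemma path_app A r B r' C : path A r B -> path B r' C -> path A (r ++ r') C.
Proof. induction 1; simpl; auto. intros; constructor; auto. Qed.

Lemma tinv_involutive t : tinv (tinv t) = t.
Proof. destruct t as [P th f Q]; unfold tinv; simpl; rewrite Bool.negb_involutive; auto. Qed.

Lemma is_trans_tinv t : is_trans t -> is_trans (tinv t).
Proof. destruct t as [P th [|] Q]; unfold is_trans, tinv; simpl; auto. Qed.

Lemma square_tinv t t' : square t t' -> square (tinv t) (tinv t').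
Proof.
  intros (u & u' & I1 & I2 & I3 & I4 & E1 & E2 & E3 & E4 & E5 & E6 & E7 & E8 & _ & Hi).
  exists u', u.
  pose proof (is_trans_tinv _ I1). pose proof (is_trans_tinv _ I4).
  destruct t as [P th f Q], t' as [R th' f' S], u as [P1 thu g R1], u' as [Q1 thu' g' S1].
  unfold tinv in *; simpl in *; subst.
  repeat split; auto.
  left. exists [Tr Q thu g S1]. apply (@path_cons (Tr Q thu g S1)); auto. constructor.
Qed.

Lemma ev_eq_tinv t t' : ev_eq t t' -> ev_eq (tinv t) (tinv t').
Proof.
  induction 1; [apply rst_step, square_tinv | apply rst_refl | apply rst_sym | eapply rst_trans];
    eauto.
Qed.

Lemma in_ev_tinv s e : in_ev (tinv s) e <-> in_ev s (tinv e).
Proof.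
  split; intros H; apply ev_eq_tinv in H; rewrite tinv_involutive in H; exact H.
Qed.

Lemma ev_eq_forward_reachable t t' : ev_eq t t' ->
  (forward_reachable (tsrc t) <-> forward_reachable (tsrc t')).
Proof.
  induction 1 as [t t' (u & u' & _ & Iu & _ & _ & E1 & _ & E3 & _)| | |]; try tauto.
  rewrite <- E1, E3. apply is_trans_forward_reachable; auto.
Qed.

Definition below (X : proc) (k x : key) : Prop := clos_refl_trans key (ord X) x k.

Lemma below_down_closed X k : down_closed X (below X k).
Proof. intros x y Ho Hy. eapply rt_trans; [apply rt_step|]; eauto. Qed.

Lemma step_below A th B k : step A th B -> pkey th <> k ->
  (forall x, below A k x <-> below B k x) /\ restrict (below A k) A = restrict (below B k) B.
Proof.
  intros S Hk.
  assert (Hiff : forall x, below A k x <-> below B k x).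
  { intros x; split; unfold below; intros Hx.
    - clear Hk. induction Hx as [x y Ho| |x y z _ IH1 _ IH2];
        [apply rt_step; exact (step_ord_incl S _ _ Ho) | apply rt_refl | eapply rt_trans; eauto].
    - apply clos_rt_rt1n in Hx. induction Hx as [|x y z Ho Hy IH]; [apply rt_refl|].
      destruct (step_ord_inv S _ _ Ho) as [Ho'|[-> _]].
      + eapply rt_trans; [apply rt_step|]; eauto.
      + exfalso. destruct Hy as [|y' ? Ho' _]; [auto | exact (step_key_maximal S _ Ho')]. }
  split; auto.
  rewrite (restrict_ext _ _ A Hiff), <- (undo_step S), restrict_undo; auto.
  intros Hb. apply clos_rt_rt1n in Hb.
  destruct Hb as [|y ? Ho _]; [auto | exact (step_key_maximal S _ Ho)].
Qed.

(* The end of [t] that carries the key of [t]: the target of a forward, the source of a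
   backward transition. *)
Definition keyed_end (t : trans) : proc := if tfwd t then ttgt t else tsrc t.
Definition past_keys (t : trans) : key -> Prop := below (keyed_end t) (pkey (tlab t)).

Definition past (t : trans) : proc := restrict (past_keys t) (keyed_end t).

Definition same_past (t t' : trans) : Prop :=
  tlab t = tlab t' /\ tfwd t = tfwd t' /\
  (forall x, past_keys t x <-> past_keys t' x) /\ past t = past t'.

Lemma square_same_past t t' : square t t' -> same_past t t'.
Proof.
  intros (u & u' & It & Iu & Iu' & It' & E1 & E2 & E3 & E4 & E5 & E6 & E7 & E8 & _).
  destruct t as [P th f Q], t' as [R th' f' S], u as [P1 thu g R1], u' as [Q1 thu' g' S1].
  simpl in *; subst. unfold is_trans in *; simpl in *.
  unfold same_past, past, past_keys, keyed_end; simpl.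
  (* The keyed ends of [t] and [t'] are joined by a copy of [u], whose key is not that of [t]. *)
  repeat split; auto;
  destruct f, g;
    first [ destruct (step_below Iu' (step_key_neq Iu' (step_key_new It))) as [H1 H2]
          | destruct (step_below Iu' (step_key_neq Iu' (step_key_new It'))) as [H1 H2]
          | destruct (step_below Iu (step_key_neq Iu (step_key_new It))) as [H1 H2]
          | destruct (step_below Iu (step_key_neq Iu (step_key_new It'))) as [H1 H2] ];
    try (rewrite H1 || rewrite <- H1); auto.
Qed.

Lemma ev_eq_same_past t t' : ev_eq t t' -> same_past t t'.
Proof.
  unfold same_past. induction 1 as [t t' Sq| | t t' _ IH | t t' t'' _ IH1 _ IH2].
  - now apply square_same_past.
  - repeat split; auto.
  - destruct IH as (A1 & A2 & A3 & A4). repeat split; auto; apply A3; auto.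
  - destruct IH1 as (A1 & A2 & A3 & A4), IH2 as (B1 & B2 & B3 & B4).
    repeat split; try congruence; intros; [apply B3, A3 | apply A3, B3]; auto.
Qed.

Lemma restrict_step_ev_eq D A th B : forward_reachable A -> step A th B ->
  down_closed B D -> D (pkey th) ->
  step (restrict D A) th (restrict D B) /\
  ev_eq (Tr A th true B) (Tr (restrict D A) th true (restrict D B)).
Proof.
  revert A th.
  induction B as [B IH] using (well_founded_ind (well_founded_ltof _ (fun X => length (keys X)))).
  intros A th FA S Hd Dk.
  (* Undo a maximal key outside D at both ends of the step: the two undoings and the step form a
     square, and recursion on the smaller target finishes. *)
  destruct (maximal_key_outside (fr_step FA S) Hd) as [Hall | (j & Hj & nD & Hm)].
  { rewrite (restrict_id _ B Hall), (restrict_id _ A).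
    - split; [exact S | apply rst_refl].
    - intros x Hx. exact (Hall x (step_keys_incl S _ Hx)). }
  assert (HjA : In j (keys A)).
  { destruct (step_keys_inv S _ Hj) as [->|?]; [contradiction | auto]. }
  destruct (undo_maximal_key _ FA HjA (fun y Ho => Hm y (step_ord_incl S _ _ Ho)))
    as (thj & <- & U & FU).
  destruct (step_swappable S U (Hm _)) as (T1 & T2 & Ind).
  assert (Sq : square (Tr A th true B) (Tr (undo A (pkey thj)) th true (undo B (pkey thj)))).
  { exists (Tr A thj false (undo A (pkey thj))), (Tr B thj false (undo B (pkey thj))).
    unfold is_trans; simpl. repeat split; auto.
    left. exists [Tr A thj false (undo A (pkey thj))].
    apply (@path_cons (Tr A thj false (undo A (pkey thj)))); auto. constructor. }
  destruct (IH (undo B (pkey thj))) with (A := undo A (pkey thj)) (th := th) as [R1 R2]; auto.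
  - apply length_keys_restrict_lt with (j := pkey thj); auto.
  - intros x y Ho. apply Hd. apply ord_restrict in Ho. tauto.
  - rewrite !restrict_undo in R1, R2 by auto.
    split; [exact R1 | eapply rst_trans; [apply rst_step, Sq | exact R2]].
Qed.

Definition occurred (e : trans) (Q : proc) : Prop := restrict (past_keys e) Q = past e.

Definition indicator (P : Prop) : Z := if decide P then 1%Z else 0%Z.

Lemma sharp_exists r e : exists z, sharp r e z.
Proof.
  induction r as [|s r [z IH]]; [exists 0%Z; constructor|].
  destruct (classic (in_ev s e)); [exists (z + 1)%Z; constructor; auto|].
  destruct (classic (in_ev s (tinv e))); [exists (z - 1)%Z | exists z]; constructor; auto.
Qed.

Lemma sharp_pos_in_ev r e : sharp_pos r e -> exists s, In s r /\ in_ev s e.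
Proof.
  intros (z & Sh & Hz). induction Sh as [| s r e z Hs | s r e z _ _ _ IH | s r e z _ _ _ IH];
    try lia; [exists s; simpl; auto | |];
    destruct IH as (s' & ? & ?); try lia; exists s'; simpl; auto.
Qed.

Section ForwardEvent.

Variable e : trans.
Hypothesis He : fwd_event_rep e.

Lemma fwd_event_step : step (tsrc e) (tlab e) (ttgt e).
Proof. destruct He as [I F]. unfold is_trans in I. rewrite F in I. exact I. Qed.

Lemma fwd_keyed_end : keyed_end e = ttgt e.
Proof. unfold keyed_end. now rewrite (proj2 He). Qed.

Lemma past_keys_target x : past_keys e x -> In x (keys (ttgt e)).
Proof.
  unfold past_keys. rewrite fwd_keyed_end. intros Hx. apply clos_rt_rt1n in Hx.
  inversion Hx as [|? y Ho]; subst;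
    [exact (step_key_new fwd_event_step) | exact (proj1 (ord_keys _ _ _ Ho))].
Qed.

Lemma ev_key_in_past : In (ev_key e) (keys (past e)).
Proof.
  apply keys_restrict. rewrite fwd_keyed_end.
  split; [exact (step_key_new fwd_event_step) | apply rt_refl].
Qed.

Lemma occurred_key Q : occurred e Q -> In (ev_key e) (keys Q).
Proof.
  unfold occurred. intros O. pose proof ev_key_in_past as K. rewrite <- O in K.
  apply keys_restrict in K. tauto.
Qed.

Lemma occurred_step_iff A th B : step A th B -> ~ past_keys e (pkey th) ->
  (occurred e A <-> occurred e B).
Proof. intros S nD. unfold occurred. rewrite <- (undo_step S), restrict_undo; tauto. Qed.

Lemma occurred_step A th B : step A th B -> occurred e A -> occurred e B.
Proof.
  intros S OA. destruct (decide (past_keys e (pkey th))) as [Dk|nDk].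
  - exfalso. apply (step_key_fresh S).
    assert (K : In (pkey th) (keys (past e))).
    { apply keys_restrict. split; auto. rewrite fwd_keyed_end. exact (past_keys_target Dk). }
    rewrite <- OA in K. apply keys_restrict in K. tauto.
  - exact (proj1 (occurred_step_iff S nDk) OA).
Qed.

Hypothesis Fe : forward_reachable (tsrc e).

Lemma past_std_guarded : std_guarded (past e).
Proof.
  apply std_guarded_restrict.
  - rewrite fwd_keyed_end. apply forward_reachable_std_guarded. exact (fr_step Fe fwd_event_step).
  - apply below_down_closed.
Qed.

Lemma occurred_down_closed Q : occurred e Q -> down_closed Q (past_keys e).
Proof. intros O. apply std_guarded_restrict_down_closed. rewrite O. exact past_std_guarded. Qed.

Lemma occurred_ord Q x y : occurred e Q -> past_keys e x -> past_keys e y ->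
  (ord Q x y <-> ord (ttgt e) x y).
Proof.
  intros O Dx Dy.
  transitivity (ord (restrict (past_keys e) Q) x y); [rewrite ord_restrict; tauto|].
  rewrite O. unfold past. rewrite fwd_keyed_end, ord_restrict. tauto.
Qed.

Lemma past_keys_below Q : occurred e Q -> forall x, past_keys e x <-> below Q (ev_key e) x.
Proof.
  intros O x. unfold below. split; intros Hx.
  - pose proof Hx as Dx. unfold past_keys, below in Hx. rewrite fwd_keyed_end in Hx.
    unfold ev_key. remember (pkey (tlab e)) as k eqn:Ek.
    apply clos_rt_rt1n in Hx. induction Hx as [|x y z Ho Hy IH]; [apply rt_refl|].
    assert (Dy : past_keys e y).
    { unfold past_keys, below. rewrite fwd_keyed_end, <- Ek. exact (clos_rt1n_rt _ _ _ _ Hy). }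
    eapply rt_trans; [apply rt_step, (occurred_ord O Dx Dy), Ho | exact (IH Ek Dy)].
  - remember (ev_key e) as k eqn:Ek. apply clos_rt_rt1n in Hx.
    induction Hx as [|x y z Ho _ IH]; [subst; apply rt_refl | ].
    exact (occurred_down_closed O x Ho (IH Ek)).
Qed.

Lemma fwd_event_eta : e = Tr (tsrc e) (tlab e) true (ttgt e).
Proof. destruct He as [_ F]. rewrite <- F. destruct e; reflexivity. Qed.

Lemma in_ev_occurred t : is_trans t -> in_ev t e -> ~ occurred e (tsrc t) /\ occurred e (ttgt t).
Proof.
  intros It Hin. destruct (ev_eq_same_past Hin) as (El & Ef & Ek & Ep).
  destruct t as [A th f B]; simpl in *. rewrite (proj2 He) in Ef. subst th f.
  unfold is_trans in It; simpl in It. unfold occurred. split.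
  - intros OA. apply (step_key_fresh It).
    pose proof ev_key_in_past as K. rewrite <- OA in K. apply keys_restrict in K. tauto.
  - rewrite <- Ep. unfold past, keyed_end; simpl. apply restrict_ext. intros x. rewrite Ek. tauto.
Qed.

Lemma in_ev_inv_occurred t : is_trans t -> in_ev t (tinv e) ->
  occurred e (tsrc t) /\ ~ occurred e (ttgt t).
Proof.
  intros It Hin. apply in_ev_tinv in Hin.
  destruct (in_ev_occurred (is_trans_tinv _ It) Hin). simpl in *. tauto.
Qed.

Lemma occurring_step_key A th B : step A th B -> occurred e B -> past_keys e (pkey th) ->
  pkey th = ev_key e.
Proof.
  intros S OB Dk. apply (past_keys_below OB) in Dk. unfold below in Dk.
  apply clos_rt_rt1n in Dk. inversion Dk as [Ek|? y Ho]; [reflexivity|].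
  exfalso. exact (step_key_maximal S _ Ho).
Qed.

Lemma step_into_occurred A th B : forward_reachable A -> step A th B ->
  occurred e B -> ~ occurred e A -> in_ev (Tr A th true B) e.
Proof.
  intros FA S OB nOA.
  assert (Dk : past_keys e (pkey th)).
  { apply NNPP. intros nD. exact (nOA (proj2 (occurred_step_iff S nD) OB)). }
  pose proof (occurring_step_key S OB Dk) as Ek. unfold ev_key in Ek.
  assert (EB : restrict (past_keys e) B = restrict (past_keys e) (ttgt e)).
  { unfold occurred in OB. rewrite OB. unfold past. now rewrite fwd_keyed_end. }
  assert (EA : restrict (past_keys e) A = restrict (past_keys e) (tsrc e)).
  { rewrite <- (undo_step S), <- (undo_step fwd_event_step), Ek.
    rewrite !(restrict_comm (past_keys e)), EB. reflexivity. }
  destruct (restrict_step_ev_eq FA S (occurred_down_closed OB) Dk) as [S1 E1].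
  destruct (restrict_step_ev_eq (D := past_keys e) Fe fwd_event_step) as [S2 E2].
  { unfold past_keys. rewrite fwd_keyed_end. apply below_down_closed. }
  { apply rt_refl. }
  rewrite EA, EB in S1, E1.
  pose proof (step_label_unique S2 S1) as El. subst th.
  unfold in_ev. rewrite fwd_event_eta.
  eapply rst_trans; [exact E1 | apply rst_sym; exact E2].
Qed.

Lemma occurred_trans t : is_trans t -> forward_reachable (tsrc t) ->
  ~ in_ev t e -> ~ in_ev t (tinv e) -> (occurred e (tsrc t) <-> occurred e (ttgt t)).
Proof.
  intros It Ft n1 n2. destruct t as [A th [|] B]; unfold is_trans in It; simpl in *.
  - split; [exact (occurred_step It)|]. intros OB. apply NNPP. intros nOA.
    exact (n1 (step_into_occurred Ft It OB nOA)).
  - split; [|exact (occurred_step It)]. intros OA. apply NNPP. intros nOB.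
    apply n2, in_ev_tinv. exact (step_into_occurred (forward_reachable_back It Ft) It OA nOB).
Qed.

Lemma sharp_occurred A r B z : path A r B -> forward_reachable A -> sharp r e z ->
  z = (indicator (occurred e B) - indicator (occurred e A))%Z.
Proof.
  intros P; revert z. induction P as [A | t r B It P IH]; intros z FA Sh.
  - inversion Sh; subst. lia.
  - pose proof (proj1 (is_trans_forward_reachable _ It) FA) as Ft.
    inversion Sh as [| ? ? ? z' Hin Sh' | ? ? ? z' _ Hin Sh' | ? ? ? ? n1 n2 Sh']; subst;
      rewrite (IH _ Ft Sh'); unfold indicator;
      [ pose proof (in_ev_occurred It Hin)
      | pose proof (in_ev_inv_occurred It Hin)
      | pose proof (occurred_trans It FA n1 n2) ];
      destruct (decide (occurred e (ttgt t))), (decide (occurred e (tsrc t))); tauto || lia.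
Qed.

Lemma sharp_pos_iff_occurred P r B : standard P -> path P r B ->
  (sharp_pos r e <-> occurred e B).
Proof.
  intros HP Pth.
  assert (nOP : ~ occurred e P).
  { intros O. pose proof (occurred_key O) as K. rewrite HP in K. contradiction. }
  pose proof (fun z => sharp_occurred (z := z) Pth (fr_standard HP)) as Hz.
  unfold indicator in Hz. destruct (decide (occurred e P)); [contradiction|].
  split.
  - intros (z & Sh & Hpos). rewrite (Hz z Sh) in Hpos. destruct (decide (occurred e B)); auto; lia.
  - intros OB. destruct (sharp_exists r e) as [z Sh]. exists z. split; auto.
    rewrite (Hz z Sh). destruct (decide (occurred e B)); [lia | contradiction].
Qed.

End ForwardEvent.

Lemma sharp_pos_forward_reachable P r B e : path P r B -> sharp_pos r e ->
  (forward_reachable P <-> forward_reachable (tsrc e)).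
Proof.
  intros Pth Sp. destruct (sharp_pos_in_ev Sp) as (s & Hs & Hin).
  rewrite (proj2 (path_forward_reachable Pth) s Hs). exact (ev_eq_forward_reachable Hin).
Qed.

Lemma in_evX_occurred X e : forward_reachable X -> fwd_event_rep e -> in_evX X e ->
  forward_reachable (tsrc e) /\ occurred e X.
Proof.
  intros FX He (P & r & Rt & Pth & Sp).
  assert (FP : forward_reachable P) by exact (proj2 (proj1 (path_forward_reachable Pth)) FX).
  assert (Fe : forward_reachable (tsrc e)) by exact (proj1 (sharp_pos_forward_reachable Pth Sp) FP).
  split; auto.
  exact (proj1 (sharp_pos_iff_occurred He Fe (forward_reachable_rooted FP Rt) Pth) Sp).
Qed.

Lemma path_to_restrict D X : forward_reachable X -> down_closed X D ->
  exists r, path X r (restrict D X).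
Proof.
  induction X as [X IH] using (well_founded_ind (well_founded_ltof _ (fun X => length (keys X)))).
  intros FX Hd.
  destruct (maximal_key_outside FX Hd) as [Hall | (j & Hj & nD & Hm)].
  - exists []. rewrite (restrict_id _ X Hall). constructor.
  - destruct (undo_maximal_key _ FX Hj Hm) as (thj & Ej & S & FU).
    destruct (IH (undo X j)) as [r Hr]; auto.
    + apply length_keys_restrict_lt with (j := j); auto.
    + intros x y Ho. apply Hd. apply ord_restrict in Ho. tauto.
    + rewrite restrict_undo in Hr by auto. exists (Tr X thj false (undo X j) :: r).
      apply (@path_cons (Tr X thj false (undo X j))); auto.
Qed.

Lemma occurred_restrict e X : occurred e X -> occurred e (restrict (past_keys e) X).
Proof. unfold occurred. intros O. rewrite restrict_restrict, <- O. apply restrict_ext. tauto. Qed.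

Lemma occurred_incl e1 e2 X Q : (forall x, past_keys e1 x -> past_keys e2 x) ->
  occurred e1 X -> occurred e2 X -> occurred e2 Q -> occurred e1 Q.
Proof.
  unfold occurred. intros Sub O1 O2 OQ.
  transitivity (restrict (past_keys e1) (restrict (past_keys e2) Q)).
  - rewrite restrict_restrict. apply restrict_ext. firstorder.
  - rewrite OQ, <- O2, restrict_restrict, <- O1. apply restrict_ext. firstorder.
Qed.

Lemma ev_le_past_keys X e1 e2 : reachable X -> fwd_event_rep e1 -> fwd_event_rep e2 ->
  forward_reachable (tsrc e1) -> forward_reachable (tsrc e2) ->
  occurred e2 X -> ev_le e1 e2 -> past_keys e2 (ev_key e1).
Proof.
  intros (P & r0 & HP & Hr0) F1 F2 Fe1 Fe2 O2 Hle.
  pose proof (proj1 (proj1 (path_forward_reachable Hr0)) (fr_standard HP)) as FX.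
  destruct (path_to_restrict FX (occurred_down_closed F2 Fe2 O2)) as [r1 Hr1].
  pose proof (path_app Hr0 Hr1) as Pth.
  assert (Sp2 : sharp_pos (r0 ++ r1) e2).
  { apply (sharp_pos_iff_occurred F2 Fe2 HP Pth). exact (occurred_restrict O2). }
  assert (Rt : rooted_path (r0 ++ r1)).
  { exists P, (restrict (past_keys e2) X). split; [exact Pth | exact (standard_rooted HP)]. }
  pose proof (proj1 (sharp_pos_iff_occurred F1 Fe1 HP Pth) (Hle _ Rt Sp2)) as O1.
  apply (occurred_key F1), keys_restrict in O1. tauto.
Qed.

Lemma past_keys_ev_le X e1 e2 : fwd_event_rep e1 -> fwd_event_rep e2 ->
  forward_reachable (tsrc e1) -> forward_reachable (tsrc e2) ->
  occurred e1 X -> occurred e2 X -> past_keys e2 (ev_key e1) -> ev_le e1 e2.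
Proof.
  intros F1 F2 Fe1 Fe2 O1 O2 D21 r (P & B & Pth & Rt) Sp2.
  assert (HP : standard P).
  { apply forward_reachable_rooted; [|exact Rt].
    exact (proj2 (sharp_pos_forward_reachable Pth Sp2) Fe2). }
  apply (sharp_pos_iff_occurred F1 Fe1 HP Pth).
  apply (sharp_pos_iff_occurred F2 Fe2 HP Pth) in Sp2.
  apply (occurred_incl (X := X) (e2 := e2)); auto.
  intros x D1. apply (past_keys_below F2 Fe2 O2). apply (past_keys_below F2 Fe2 O2) in D21.
  apply (past_keys_below F1 Fe1 O1) in D1. exact (rt_trans _ _ _ _ _ D1 D21).
Qed.

Theorem theorem6p15 :
  forall (X : proc) (e1 e2 : trans),
    reachable X ->
    fwd_event_rep e1 -> fwd_event_rep e2 ->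
    in_evX X e1 -> in_evX X e2 ->
    (ev_le e1 e2 <-> le_X X (ev_key e1) (ev_key e2)).
Proof.
  intros X e1 e2 HX F1 F2 I1 I2.
  pose proof (reachable_forward_reachable HX) as FX.
  destruct (in_evX_occurred FX F1 I1) as [Fe1 O1].
  destruct (in_evX_occurred FX F2 I2) as [Fe2 O2].
  unfold le_X. change (clos_refl_trans key (ord X) (ev_key e1) (ev_key e2))
    with (below X (ev_key e2) (ev_key e1)).
  rewrite <- (past_keys_below F2 Fe2 O2).
  split.
  - intros Hle. repeat split; [exact (occurred_key F1 O1) | exact (occurred_key F2 O2) |].
    exact (ev_le_past_keys HX F1 F2 Fe1 Fe2 O2 Hle).
  - intros (_ & _ & D21). exact (past_keys_ev_le F1 F2 Fe1 Fe2 O1 O2 D21).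
Qed.
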